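(* For $\tau,t\in\mathbb{R}$ and integer $n\ge0$ let $$\mu_{2n}(\tau,t)=\int_{-\infty}^{\infty}x^{2n}\exp(-x^6+\tau x^4+tx^2)\,dx.$$ Then $$\frac{\partial^2\mu_{2n}}{\partial\tau\,\partial t}-\tfrac23\tau\frac{\partial\mu_{2n}}{\partial\tau}-\tfrac13t\frac{\partial\mu_{2n}}{\partial t}-\tfrac16(2n+1)\mu_{2n}=0.$$ *)

From Stdlib Require Import Reals.
From Coquelicot Require Import Coquelicot.
Open Scope R_scope.

Definition integrand (n : nat) (tau t x : R) : R :=
  x ^ (2 * n) * exp (- x ^ 6 + tau * x ^ 4 + t * x ^ 2).

Definition mu (n : nat) (tau t : R) : R :=
  RInt_gen (integrand n tau t)
    (Rbar_locally m_infty) (Rbar_locally p_infty).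

Definition d_tau (f : R -> R -> R) (tau t : R) : R :=
  Derive (fun s => f s t) tau.
Definition d_t (f : R -> R -> R) (tau t : R) : R :=
  Derive (fun s => f tau s) t.

From Stdlib Require Import Reals Lra Lia Psatz Classical.
From Coquelicot Require Import Coquelicot.
Open Scope R_scope.

(* Differentiating under the integral sign multiplies the integrand by x^2 (for t) or by x^4
   (for tau), so d_t mu_2n = mu_(2n+2), d_tau mu_2n = mu_(2n+4), d_tau d_t mu_2n = mu_(2n+6).
   The equation is then -1/6 times the integration by parts identity
   int (x^(2n+1) exp(-x^6 + tau x^4 + t x^2))' dx = 0.
   All analytic justifications rest on one estimate: each x^(2n) exp(-x^6 + tau x^4 + t x^2)
   is bounded, so every such integrand decays like 1/(1 + x^2), which dominates the improper
   integrals and, through |e^y - 1 - y| <= y^2 e^|y|, the difference quotients in tau and t. *)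

Lemma exp_le_compat x y : x <= y -> exp x <= exp y.
Proof. intros [Hlt | ->]; [left; apply exp_increasing; exact Hlt | lra]. Qed.

Lemma exp_sub_1_sub_le y z : Rabs y <= z -> Rabs (exp y - 1 - y) <= y ^ 2 * exp z.
Proof.
  intros Hyz.
  assert (Hexp : exp (- y) * exp y = 1)
    by (rewrite <- exp_plus, Rplus_opp_l; apply exp_0).
  pose proof (exp_ineq1_le y). pose proof (exp_ineq1_le (- y)). pose proof (exp_pos y).
  apply Rle_trans with (y ^ 2 * exp (Rabs y));
    [| apply Rmult_le_compat_l; [apply pow2_ge_0 | apply exp_le_compat, Hyz]].
  rewrite Rabs_pos_eq by lra.
  destruct (Rle_dec 0 y) as [Hy | Hy].
  - rewrite Rabs_pos_eq by lra.
    assert (exp y - 1 <= y * exp y) by nra.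
    nra.
  - rewrite Rabs_left by lra.
    assert ((exp y - 1 - y) * (1 - y) <= y ^ 2) by nra.
    nra.
Qed.

Lemma pow_le_exp_mul u n : 0 <= u -> u ^ n <= exp (INR n * u).
Proof.
  intros Hu. induction n as [| n IH].
  - rewrite Rmult_0_l, exp_0. simpl; lra.
  - rewrite S_INR, Rmult_plus_distr_r, Rmult_1_l, exp_plus. simpl.
    rewrite Rmult_comm. apply Rmult_le_compat; [apply pow_le | | |]; auto.
    pose proof (exp_ineq1_le u); lra.
Qed.

Lemma cubic_bounded_above a b :
  exists K, forall u, 0 <= u -> - u ^ 3 + a * u ^ 2 + b * u <= K.
Proof.
  set (M := Rabs a + Rabs b + 1).
  pose proof (Rle_abs a). pose proof (Rle_abs b).
  pose proof (Rabs_pos a). pose proof (Rabs_pos b).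
  exists (Rabs a * M ^ 2 + Rabs b * M). intros u Hu.
  assert (Hau : a * u ^ 2 <= Rabs a * u ^ 2) by (apply Rmult_le_compat_r; nra).
  assert (Hbu : b * u <= Rabs b * u) by (apply Rmult_le_compat_r; nra).
  destruct (Rle_dec u M) as [HuM | HuM].
  - assert (u ^ 2 <= M ^ 2) by (apply pow_incr; lra).
    assert (Rabs b * u <= Rabs b * M) by (apply Rmult_le_compat_l; lra).
    nra.
  - assert (Hu1 : 1 <= u) by (unfold M in HuM; lra).
    assert (Rabs b * u <= Rabs b * u ^ 2) by (apply Rmult_le_compat_l; nra).
    assert ((Rabs a + Rabs b) * u ^ 2 <= u * u ^ 2)
      by (apply Rmult_le_compat_r; [nra | unfold M in HuM; lra]).
    assert (0 <= Rabs a * M ^ 2 + Rabs b * M) by (unfold M; nra).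
    simpl in *; nra.
Qed.

Lemma filterlim_p_infty_nondecreasing (G : R -> R) M :
  (forall a b, a <= b -> G a <= G b) -> (forall x, G x <= M) ->
  exists l, filterlim G (Rbar_locally p_infty) (locally l).
Proof.
  intros Hmono HM.
  destruct (completeness (fun y => exists x, y = G x)) as [l [Hub Hlub]].
  - exists M. intros y [x ->]. apply HM.
  - exists (G 0), 0. reflexivity.
  - exists l. apply filterlim_locally. intros eps.
    destruct (classic (exists x0, l - eps < G x0)) as [[x0 Hx0] | Hnone].
    + exists x0. intros x Hx. apply Rabs_def1.
      * assert (G x <= l) by (apply Hub; exists x; reflexivity).
        pose proof (cond_pos eps). change (G x - l < eps). lra.
      * assert (G x0 <= G x) by (apply Hmono; lra). change (- eps < G x - l). lra.
    + exfalso. assert (l <= l - eps).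
      { apply Hlub. intros y [x ->]. apply Rnot_lt_le. intros Hlt.
        apply Hnone. exists x. exact Hlt. }
      pose proof (cond_pos eps). lra.
Qed.

Lemma filterlim_m_infty_nondecreasing (G : R -> R) M :
  (forall a b, a <= b -> G a <= G b) -> (forall x, M <= G x) ->
  exists l, filterlim G (Rbar_locally m_infty) (locally l).
Proof.
  intros Hmono HM.
  destruct (filterlim_p_infty_nondecreasing (fun x => - G (- x)) (- M)) as [l Hl].
  - intros a b Hab. apply Ropp_le_contravar, Hmono. lra.
  - intros x. apply Ropp_le_contravar, HM.
  - exists (opp l).
    apply (filterlim_ext (fun x => opp (- G (- (- x))))).
    { intros x. unfold opp; simpl. rewrite !Ropp_involutive. reflexivity. }
    eapply filterlim_comp; [| apply (@filterlim_opp R_AbsRing R_NormedModule)].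
    exact (filterlim_comp _ _ _ Ropp (fun y => - G (- y)) _ _ _
             (filterlim_Rbar_opp m_infty) Hl).
Qed.

Lemma is_RInt_gen_at_point_filterlim (f : R -> R) a F {FF : Filter F} l :
  (forall b, ex_RInt f a b) -> filterlim (fun b => RInt f a b) F (locally l) ->
  is_RInt_gen f (at_point a) F l.
Proof.
  intros Hex Hlim P HP; simpl.
  apply Filter_prod with (fun x => x = a) (fun b => P (RInt f a b)).
  - reflexivity.
  - exact (Hlim P HP).
  - intros x b -> HPb. exists (RInt f a b).
    split; [apply (RInt_correct (V := R_CompleteNormedModule)), Hex | exact HPb].
Qed.

Lemma is_RInt_atan_majorant C a b :
  is_RInt (fun x => C / (1 + x ^ 2)) a b (C * (atan b - atan a)).
Proof.
  replace (C * (atan b - atan a)) with (minus (C * atan b) (C * atan a))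
    by (unfold minus, plus, opp; simpl; ring).
  apply (is_RInt_derive (fun x => C * atan x)).
  - intros x _. apply is_derive_scal. apply is_derive_Reals, derivable_pt_lim_atan.
  - intros x _. apply (@ex_derive_continuous R_AbsRing R_NormedModule).
    auto_derive. pose proof (pow2_ge_0 x). lra.
Qed.

Lemma RInt_le_atan_majorant (f : R -> R) C a b :
  a <= b -> ex_RInt f a b -> (forall x, f x * (1 + x ^ 2) <= C) ->
  RInt f a b <= C * (atan b - atan a).
Proof.
  intros Hab Hex Hdom.
  rewrite <- (is_RInt_unique _ a b _ (is_RInt_atan_majorant C a b)).
  apply RInt_le; [exact Hab | exact Hex | eexists; apply is_RInt_atan_majorant |].
  intros x _. specialize (Hdom x). pose proof (pow2_ge_0 x).
  apply Rmult_le_reg_r with (1 + x ^ 2); [lra |].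
  unfold Rdiv. rewrite Rmult_assoc, Rinv_l; lra.
Qed.

(* [RInt f 0] is nondecreasing and bounded by [C * PI]; its limits at both ends
   give the improper integral. *)
Lemma ex_RInt_gen_nonneg_dominated (f : R -> R) C :
  (forall x, continuous f x) -> (forall x, 0 <= f x) ->
  (forall x, f x * (1 + x ^ 2) <= C) ->
  ex_RInt_gen f (Rbar_locally m_infty) (Rbar_locally p_infty).
Proof.
  intros Hcont Hpos Hdom.
  assert (Hex : forall a b, ex_RInt f a b).
  { intros a b. apply (ex_RInt_continuous (V := R_CompleteNormedModule)).
    intros x _. apply Hcont. }
  assert (Hchasles : forall a b, RInt f 0 b - RInt f 0 a = RInt f a b).
  { intros a b. rewrite <- (RInt_Chasles (V := R_CompleteNormedModule) f 0 a b) by apply Hex.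
    unfold plus; simpl; ring. }
  assert (HC : 0 <= C) by (specialize (Hdom 0); specialize (Hpos 0); simpl in *; nra).
  assert (Hbound : forall a b, a <= b -> 0 <= RInt f a b <= C * PI).
  { intros a b Hab. split; [apply RInt_ge_0; auto |].
    pose proof (RInt_le_atan_majorant f C a b Hab (Hex a b) Hdom).
    pose proof (atan_bound a). pose proof (atan_bound b).
    assert (C * (atan b - atan a) <= C * PI) by (apply Rmult_le_compat_l; lra).
    lra. }
  assert (Hmono : forall a b, a <= b -> RInt f 0 a <= RInt f 0 b).
  { intros a b Hab. specialize (Hbound a b Hab). rewrite <- Hchasles in Hbound. lra. }
  assert (Hrange : forall x, - (C * PI) <= RInt f 0 x <= C * PI).
  { assert (H00 : RInt f 0 0 = 0) by apply (RInt_point (V := R_CompleteNormedModule)).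
    intros x. destruct (Rle_dec 0 x) as [Hx | Hx].
    - specialize (Hbound 0 x Hx). rewrite <- Hchasles, H00 in Hbound. lra.
    - specialize (Hbound x 0 ltac:(lra)). rewrite <- Hchasles, H00 in Hbound. lra. }
  destruct (filterlim_p_infty_nondecreasing (fun b => RInt f 0 b) (C * PI)) as [lp Hlp];
    [exact Hmono | apply Hrange |].
  destruct (filterlim_m_infty_nondecreasing (fun b => RInt f 0 b) (- (C * PI))) as [lm Hlm];
    [exact Hmono | apply Hrange |].
  pose proof (is_RInt_gen_at_point_filterlim f 0 _ lm (Hex 0) Hlm) as Hm.
  pose proof (is_RInt_gen_at_point_filterlim f 0 _ lp (Hex 0) Hlp) as Hp.
  eexists. exact (is_RInt_gen_Chasles f 0 _ _ (is_RInt_gen_swap f lm Hm) Hp).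
Qed.

Lemma filterlim_infty_0_of_abs_mul_bounded (g : R -> R) C :
  (forall x, Rabs x * Rabs (g x) <= C) ->
  filterlim g (Rbar_locally p_infty) (locally 0) /\
  filterlim g (Rbar_locally m_infty) (locally 0).
Proof.
  intros Hg.
  assert (Hsmall : forall (eps : posreal) x, Rabs C / eps < Rabs x -> ball 0 eps (g x)).
  { intros eps x Hx. pose proof (cond_pos eps).
    change (Rabs (g x - 0) < eps). rewrite Rminus_0_r.
    apply Rlt_div_l in Hx; [| exact (cond_pos eps)].
    specialize (Hg x). pose proof (Rle_abs C). pose proof (Rabs_pos x).
    destruct (Rlt_or_le (Rabs (g x)) eps) as [Hlt | Hge]; [exact Hlt | nra]. }
  split; apply filterlim_locally; intros eps;
    assert (HM : 0 <= Rabs C / eps)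
      by (apply Rdiv_le_0_compat; [apply Rabs_pos | apply cond_pos]).
  - exists (Rabs C / eps). intros x Hx. apply Hsmall. pose proof (Rle_abs x). lra.
  - exists (- (Rabs C / eps)). intros x Hx. apply Hsmall. rewrite (Rabs_left x); lra.
Qed.

Lemma is_derive_of_remainder_le (F : R -> R) s L K :
  (forall h, Rabs h <= 1 -> Rabs (F (s + h) - F s - h * L) <= K * h ^ 2) ->
  is_derive F s L.
Proof.
  intros Hrem. apply is_derive_Reals. intros eps Heps.
  assert (HK : 0 < Rabs K + 1) by (pose proof (Rabs_pos K); lra).
  assert (Hdelta : 0 < Rmin 1 (eps / (Rabs K + 1)))
    by (apply Rmin_pos; [lra | apply Rdiv_lt_0_compat; lra]).
  exists (mkposreal _ Hdelta). simpl. intros h Hh0 Hh.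
  pose proof (Rmin_l 1 (eps / (Rabs K + 1))). pose proof (Rmin_r 1 (eps / (Rabs K + 1))).
  assert (Hheps : Rabs h * (Rabs K + 1) < eps) by (apply Rlt_div_r; lra).
  specialize (Hrem h ltac:(lra)).
  assert (Habs : 0 < Rabs h) by (apply Rabs_pos_lt; exact Hh0).
  replace ((F (s + h) - F s) / h - L) with ((F (s + h) - F s - h * L) / h) by (field; exact Hh0).
  rewrite Rabs_div by exact Hh0. apply Rlt_div_l; [exact Habs |].
  assert (h ^ 2 = Rabs h * Rabs h) by (rewrite <- Rabs_mult, Rabs_pos_eq; nra).
  pose proof (Rle_abs K). nra.
Qed.

Lemma is_derive_RInt_gen (g : R -> R -> R) (dg B : R -> R) s Ld LB :
  (forall s', ex_RInt_gen (g s') (Rbar_locally m_infty) (Rbar_locally p_infty)) ->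
  is_RInt_gen dg (Rbar_locally m_infty) (Rbar_locally p_infty) Ld ->
  is_RInt_gen B (Rbar_locally m_infty) (Rbar_locally p_infty) LB ->
  (forall h x, Rabs h <= 1 -> Rabs (g (s + h) x - g s x - h * dg x) <= h ^ 2 * B x) ->
  is_derive (fun s' => RInt_gen (g s') (Rbar_locally m_infty) (Rbar_locally p_infty)) s Ld.
Proof.
  intros Hg Hdg HB Hrem.
  apply is_derive_of_remainder_le with LB. intros h Hh.
  rewrite (Rmult_comm LB).
  apply (RInt_gen_norm (Fa := Rbar_locally m_infty) (Fb := Rbar_locally p_infty)
           (fun x => g (s + h) x - g s x - h * dg x) (fun x => h ^ 2 * B x)).
  - apply Filter_prod with (fun a => a < 0) (fun b => 0 < b).
    + exists 0. intros x Hx. exact Hx.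
    + exists 0. intros x Hx. exact Hx.
    + simpl. intros; lra.
  - apply filter_forall. intros ab x _. apply Hrem, Hh.
  - apply (is_RInt_gen_minus (V := R_NormedModule));
      [apply (is_RInt_gen_minus (V := R_NormedModule)) |].
    + apply (RInt_gen_correct (V := R_CompleteNormedModule)), Hg.
    + apply (RInt_gen_correct (V := R_CompleteNormedModule)), Hg.
    + apply (is_RInt_gen_scal (V := R_NormedModule)), Hdg.
  - apply (is_RInt_gen_scal (V := R_NormedModule)), HB.
Qed.

Lemma integrand_nonneg n tau t x : 0 <= integrand n tau t x.
Proof.
  unfold integrand. apply Rmult_le_pos; [| left; apply exp_pos].
  rewrite pow_mult. apply pow_le, pow2_ge_0.
Qed.

Lemma integrand_S n tau t x : integrand (S n) tau t x = x ^ 2 * integrand n tau t x.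
Proof.
  unfold integrand. replace (2 * S n)%nat with (2 + 2 * n)%nat by lia.
  rewrite pow_add. ring.
Qed.

Lemma integrand_t_shift n tau t h x :
  integrand n tau (t + h) x = integrand n tau t x * exp (h * x ^ 2).
Proof. unfold integrand. rewrite Rmult_assoc, <- exp_plus. do 2 f_equal. ring. Qed.

Lemma integrand_tau_shift n tau t h x :
  integrand n (tau + h) t x = integrand n tau t x * exp (h * x ^ 4).
Proof. unfold integrand. rewrite Rmult_assoc, <- exp_plus. do 2 f_equal. ring. Qed.

Lemma integrand_continuous n tau t x : continuous (integrand n tau t) x.
Proof.
  apply (@ex_derive_continuous R_AbsRing R_NormedModule).
  unfold integrand. auto_derive. exact I.
Qed.

Lemma integrand_bounded n tau t : exists C, forall x, integrand n tau t x <= C.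
Proof.
  destruct (cubic_bounded_above tau (t + INR n)) as [K HK].
  exists (exp K). intros x. unfold integrand.
  pose proof (pow2_ge_0 x) as Hx2.
  apply Rle_trans with (exp (INR n * x ^ 2) * exp (- x ^ 6 + tau * x ^ 4 + t * x ^ 2)).
  - apply Rmult_le_compat_r; [left; apply exp_pos |].
    rewrite pow_mult. apply pow_le_exp_mul, Hx2.
  - rewrite <- exp_plus. apply exp_le_compat.
    specialize (HK (x ^ 2) Hx2).
    replace (x ^ 6) with ((x ^ 2) ^ 3) by ring. replace (x ^ 4) with ((x ^ 2) ^ 2) by ring.
    lra.
Qed.

Lemma ex_RInt_gen_integrand n tau t :
  ex_RInt_gen (integrand n tau t) (Rbar_locally m_infty) (Rbar_locally p_infty).
Proof.
  destruct (integrand_bounded n tau t) as [C0 H0].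
  destruct (integrand_bounded (S n) tau t) as [C1 H1].
  apply ex_RInt_gen_nonneg_dominated with (C0 + C1).
  - apply integrand_continuous.
  - apply integrand_nonneg.
  - intros x. specialize (H0 x). specialize (H1 x). rewrite integrand_S in H1. lra.
Qed.

Lemma is_RInt_gen_mu n tau t :
  is_RInt_gen (integrand n tau t) (Rbar_locally m_infty) (Rbar_locally p_infty) (mu n tau t).
Proof. apply (RInt_gen_correct (V := R_CompleteNormedModule)), ex_RInt_gen_integrand. Qed.

Lemma mul_exp_remainder_le I y z : 0 <= I -> Rabs y <= z ->
  Rabs (I * exp y - I - y * I) <= y ^ 2 * (I * exp z).
Proof.
  intros HI Hyz.
  replace (I * exp y - I - y * I) with (I * (exp y - 1 - y)) by ring.
  rewrite Rabs_mult, (Rabs_pos_eq I HI).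
  pose proof (exp_sub_1_sub_le y z Hyz). pose proof (Rabs_pos (exp y - 1 - y)). nra.
Qed.

(* For |h| <= 1 the factor exp (|h| x^2) of the Taylor remainder is absorbed by t + 1. *)
Lemma integrand_t_remainder n tau t h x : Rabs h <= 1 ->
  Rabs (integrand n tau (t + h) x - integrand n tau t x - h * integrand (S n) tau t x)
  <= h ^ 2 * integrand (S (S n)) tau (t + 1) x.
Proof.
  intros Hh. rewrite !integrand_S, !integrand_t_shift.
  pose proof (pow2_ge_0 x).
  replace (h * (x ^ 2 * integrand n tau t x)) with (h * x ^ 2 * integrand n tau t x) by ring.
  eapply Rle_trans.
  - apply mul_exp_remainder_le with (z := x ^ 2); [apply integrand_nonneg |].
    rewrite Rabs_mult, (Rabs_pos_eq (x ^ 2)) by lra. nra.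
  - rewrite Rmult_1_l. right. ring.
Qed.

Lemma integrand_tau_remainder n tau t h x : Rabs h <= 1 ->
  Rabs (integrand n (tau + h) t x - integrand n tau t x - h * integrand (S (S n)) tau t x)
  <= h ^ 2 * integrand (S (S (S (S n)))) (tau + 1) t x.
Proof.
  intros Hh. rewrite !integrand_S, !integrand_tau_shift.
  assert (0 <= x ^ 4) by (replace (x ^ 4) with ((x ^ 2) ^ 2) by ring; apply pow2_ge_0).
  replace (h * (x ^ 2 * (x ^ 2 * integrand n tau t x)))
    with (h * x ^ 4 * integrand n tau t x) by ring.
  eapply Rle_trans.
  - apply mul_exp_remainder_le with (z := x ^ 4); [apply integrand_nonneg |].
    rewrite Rabs_mult, (Rabs_pos_eq (x ^ 4)) by lra. nra.
  - rewrite Rmult_1_l. right. ring.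
Qed.

Lemma is_derive_mu_t n tau t : is_derive (fun s => mu n tau s) t (mu (S n) tau t).
Proof.
  apply (is_derive_RInt_gen (fun s => integrand n tau s) (integrand (S n) tau t)
           (integrand (S (S n)) tau (t + 1)) t _ (mu (S (S n)) tau (t + 1))).
  - intros s. apply ex_RInt_gen_integrand.
  - apply is_RInt_gen_mu.
  - apply is_RInt_gen_mu.
  - intros h x. apply integrand_t_remainder.
Qed.

Lemma is_derive_mu_tau n tau t : is_derive (fun s => mu n s t) tau (mu (S (S n)) tau t).
Proof.
  apply (is_derive_RInt_gen (fun s => integrand n s t) (integrand (S (S n)) tau t)
           (integrand (S (S (S (S n)))) (tau + 1) t) tau _
           (mu (S (S (S (S n)))) (tau + 1) t)).
  - intros s. apply ex_RInt_gen_integrand.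
  - apply is_RInt_gen_mu.
  - apply is_RInt_gen_mu.
  - intros h x. apply integrand_tau_remainder.
Qed.

Lemma is_derive_x_integrand n tau t x :
  is_derive (fun y => y * integrand n tau t y) x
    ((2 * INR n + 1) * integrand n tau t x - 6 * integrand (S (S (S n))) tau t x
     + 4 * tau * integrand (S (S n)) tau t x + 2 * t * integrand (S n) tau t x).
Proof.
  apply (is_derive_ext (fun y => y ^ S (2 * n) * exp (- y ^ 6 + tau * y ^ 4 + t * y ^ 2))).
  { intros y. unfold integrand. simpl. ring. }
  rewrite !integrand_S. unfold integrand. auto_derive; [exact I |].
  (* [auto_derive] leaves the exponent INR (S (2 * n)) unfolded. *)
  change (match (n + (n + 0))%nat with 0%nat => 1 | S _ => INR (n + (n + 0)) + 1 end)
    with (INR (S (2 * n))).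
  rewrite S_INR, mult_INR. simpl. set (E := exp _). ring.
Qed.

Lemma x_integrand_vanishes n tau t :
  filterlim (fun x => x * integrand n tau t x) (Rbar_locally p_infty) (locally 0) /\
  filterlim (fun x => x * integrand n tau t x) (Rbar_locally m_infty) (locally 0).
Proof.
  destruct (integrand_bounded (S n) tau t) as [C HC].
  apply filterlim_infty_0_of_abs_mul_bounded with C. intros x.
  rewrite <- Rabs_mult.
  replace (x * (x * integrand n tau t x)) with (integrand (S n) tau t x)
    by (rewrite integrand_S; ring).
  rewrite Rabs_pos_eq by apply integrand_nonneg. apply HC.
Qed.

Lemma mu_moment_relation n tau t :
  (2 * INR n + 1) * mu n tau t - 6 * mu (S (S (S n))) tau t
  + 4 * tau * mu (S (S n)) tau t + 2 * t * mu (S n) tau t = 0.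
Proof.
  set (D := fun x => (2 * INR n + 1) * integrand n tau t x - 6 * integrand (S (S (S n))) tau t x
                     + 4 * tau * integrand (S (S n)) tau t x + 2 * t * integrand (S n) tau t x).
  assert (HD0 : is_RInt_gen D (Rbar_locally m_infty) (Rbar_locally p_infty) (0 - 0)).
  { destruct (x_integrand_vanishes n tau t) as [Hp Hm].
    apply (is_RInt_gen_ext (Derive (fun x => x * integrand n tau t x))).
    - apply filter_forall. intros ab x _. apply is_derive_unique, is_derive_x_integrand.
    - apply is_RInt_gen_Derive; [| | exact Hm | exact Hp];
        apply filter_forall; intros ab x _.
      + eexists. apply is_derive_x_integrand.
      + apply (continuous_ext D).
        { intros y. symmetry. apply is_derive_unique, is_derive_x_integrand. }
        apply (@ex_derive_continuous R_AbsRing R_NormedModule).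
        unfold D, integrand. auto_derive. exact I. }
  assert (HD : is_RInt_gen D (Rbar_locally m_infty) (Rbar_locally p_infty)
     ((2 * INR n + 1) * mu n tau t - 6 * mu (S (S (S n))) tau t
      + 4 * tau * mu (S (S n)) tau t + 2 * t * mu (S n) tau t)).
  { apply (is_RInt_gen_plus (V := R_NormedModule));
      [apply (is_RInt_gen_plus (V := R_NormedModule)) |];
      [apply (is_RInt_gen_minus (V := R_NormedModule)) | |];
      apply (is_RInt_gen_scal (V := R_NormedModule)), is_RInt_gen_mu. }
  rewrite <- (is_RInt_gen_unique _ _ HD), (is_RInt_gen_unique _ _ HD0). ring.
Qed.

Theorem lemma5p6 (n : nat) (tau t : R) :
  (* the improper integral converges and the partial derivatives exist *)
  ex_RInt_gen (integrand n tau t) (Rbar_locally m_infty) (Rbar_locally p_infty) /\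
  ex_derive (fun s => mu n s t) tau /\
  ex_derive (fun s => mu n tau s) t /\
  ex_derive (fun s => d_t (mu n) s t) tau /\
  (* the PDE *)
  d_tau (d_t (mu n)) tau t
    - 2 / 3 * tau * d_tau (mu n) tau t
    - 1 / 3 * t * d_t (mu n) tau t
    - 1 / 6 * (2 * INR n + 1) * mu n tau t = 0.
Proof.
  assert (Hdt : forall s u, d_t (mu n) s u = mu (S n) s u)
    by (intros s u; apply is_derive_unique, is_derive_mu_t).
  assert (Hdtdtau : is_derive (fun s => d_t (mu n) s t) tau (mu (S (S (S n))) tau t)).
  { apply (is_derive_ext (fun s => mu (S n) s t)); [intros s; symmetry; apply Hdt |].
    apply is_derive_mu_tau. }
  assert (Hdtau : d_tau (mu n) tau t = mu (S (S n)) tau t)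
    by (apply is_derive_unique, is_derive_mu_tau).
  assert (Hdtdtau_eq : d_tau (d_t (mu n)) tau t = mu (S (S (S n))) tau t)
    by (apply is_derive_unique, Hdtdtau).
  repeat split.
  - apply ex_RInt_gen_integrand.
  - eexists. apply is_derive_mu_tau.
  - eexists. apply is_derive_mu_t.
  - eexists. exact Hdtdtau.
  - rewrite Hdtdtau_eq, Hdtau, Hdt. pose proof (mu_moment_relation n tau t). lra.
Qed.
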